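(* Let $t\ge2$, $n_1,\dots,n_t\ge1$, $n=n_1+\dots+n_t$, and let $G=K_{n_1,\dots,n_t}$ be the complete multipartite graph with partite sets $Y_1,\dots,Y_t$, $|Y_i|=n_i$. Then the inclusion-minimal skew forcing sets of $G$ are exactly the sets $V(G)\setminus\{u,v\}$ with $u,v$ in different partite sets; these are exactly the vertices of $\mathfrak{Z}^-(G)$ of cardinality $n-2$, and each has degree $2$ in $\mathfrak{Z}^-(G)$. Every set $V(G)\setminus\{y\}$ with $y\in Y_i$ is a skew forcing set and has degree $n-n_i+1$ in $\mathfrak{Z}^-(G)$. Moreover $\mathfrak{Z}^-(G)$ is unique: if $G'$ is a graph with no isolated vertices and $\mathfrak{Z}^-(G')\cong\mathfrak{Z}^-(G)$, then $G'\cong G$.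
   Context: All graphs are finite, simple, undirected. Skew color change rule: with $W$ the set of white (non-blue) vertices, any vertex $u$ (blue or white) may color a white vertex $w$ blue if $N(u)\cap W=\{w\}$. $S$ is a skew forcing set if starting with exactly $S$ blue and applying the rule repeatedly, all vertices become blue. The skew TAR graph $\mathfrak{Z}^-(G)$ has as vertices the skew forcing sets of $G$, with $S_1S_2$ an edge iff $|S_1\ominus S_2|=1$ (symmetric difference). A complete multipartite graph $K_{n_1,\dots,n_t}$ has vertex set partitioned into sets of sizes $n_1,\dots,n_t$, with exactly the edges between vertices in distinct parts. *)

From mathcomp Require Import all_boot.
Set Implicit Arguments. Unset Strict Implicit. Unset Printing Implicit Defensive.

(* A graph is a relation e on a finite type (simple: symmetric, irreflexive). *)
Section Skew.
Variables (T : finType) (e : rel T).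

Definition nbhd (x : T) : {set T} := [set y | e x y].

(* One application of the skew color change rule: with W = ~: B the white set,
   some vertex u (blue or white) has N(u) ∩ W = {w}, and w becomes blue. *)
Definition skew_step (B B' : {set T}) : bool :=
  [exists u, [exists w, (nbhd u :&: ~: B == [set w]) && (B' == w |: B)]].

Definition skew_forcing (S : {set T}) : bool := connect skew_step S setT.

Definition symdiff (A B : {set T}) : {set T} := (A :\: B) :|: (B :\: A).

Definition tar_vertices : {set {set T}} := [set S | skew_forcing S].
Definition tar_adj : rel {set T} := fun S1 S2 =>
  [&& skew_forcing S1, skew_forcing S2 & #|symdiff S1 S2| == 1].
Definition tar_deg (S : {set T}) : nat := #|[set S' | tar_adj S S']|.
End Skew.

Definition iso_on (U W : finType) (A : {set U}) (r : rel U)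
    (B : {set W}) (s : rel W) : Prop :=
  exists f : U -> W, [/\ {in A &, injective f}, f @: A = B &
    {in A &, forall x y, r x y = s (f x) (f y)}].

Definition graph_iso (U W : finType) (r : rel U) (s : rel W) : Prop :=
  iso_on [set: U] r [set: W] s.

Definition tar_iso (U W : finType) (r : rel U) (s : rel W) : Prop :=
  iso_on (tar_vertices r) (tar_adj r) (tar_vertices s) (tar_adj s).

(* Complete multipartite graph K_{n_0,...,n_{t-1}}: vertex (i, j) is the j-th
   vertex of partite set Y_i; edges exactly between distinct parts. *)
Definition kmp_vertex (t : nat) (n : 'I_t -> nat) : finType :=
  {i : 'I_t & 'I_(n i)}.
Definition kmp_adj (t : nat) (n : 'I_t -> nat) : rel (kmp_vertex n) :=
  fun x y => tag x != tag y.
Arguments kmp_vertex {t} n.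
Arguments kmp_adj {t} n.

From mathcomp Require Import all_boot zify.
Set Implicit Arguments. Unset Strict Implicit. Unset Printing Implicit Defensive.

(* Everything is read off the set W of white vertices.  In a complete
   multipartite graph non-adjacency is an equivalence relation.  A vertex u that
   forces w has no other white neighbour, so all other white vertices lie in
   the part of u: they are pairwise non-adjacent and adjacent to w.  Hence
   "W is a clique of at most two vertices" is preserved backwards along
   forcing steps, and S is skew forcing iff V \ S is such a clique.  The TAR
   neighbours of a skew forcing set arise by toggling one vertex, which gives
   the degrees |V|, deg y + 1 and 2 of V, V \ {y} and V \ {u, v}.

   For uniqueness, a TAR isomorphism first forces G' to be complete
   multipartite: if x ~ z while y is adjacent to neither, the 4-cycles through
   V and through V \ {z} obtained by removing x and y are disjoint, whereas in
   Z^-(G) every 4-cycle with distinct opposite vertices passes through V.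
   Then the number of TAR vertices of each degree determines |V|, the number
   of edges and the degree sequence of G; a vertex of degree d lies in a part
   of size |V| - d, so the part sizes of G and G' agree, and two equivalence
   relations with the same class sizes are isomorphic. *)

Section Symdiff.
Variable T : finType.
Implicit Types (A B : {set T}) (x : T).

Lemma symdiffC A B : symdiff A B = symdiff B A.
Proof. by apply/setP => y; rewrite !inE orbC. Qed.

Lemma symdiffK A B : symdiff A (symdiff A B) = B.
Proof. by apply/setP => y; rewrite !inE; case: (y \in A); case: (y \in B). Qed.

Lemma symdiff_setCl A B : symdiff (~: A) B = ~: symdiff A B.
Proof. by apply/setP => y; rewrite !inE; case: (y \in A); case: (y \in B). Qed.

Lemma symdiff_setC A B : symdiff (~: A) (~: B) = symdiff A B.
Proof. by apply/setP => y; rewrite !inE; case: (y \in A); case: (y \in B). Qed.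

Lemma symdiff_set1 A x : symdiff A [set x] = if x \in A then A :\ x else x |: A.
Proof.
apply/setP => y; case: (boolP (x \in A)) => xA; rewrite !inE;
  by case: (y =P x) => [->|_]; rewrite /= ?xA ?andbF ?orbF ?orbT.
Qed.

Lemma symdiff_setD1 A x : x \in A -> symdiff A (A :\ x) = [set x].
Proof.
move=> xA; apply/setP => y; rewrite !inE.
by case: (y =P x) => [->|_]; rewrite ?xA //=; case: (y \in A).
Qed.

Lemma symdiff_card1P A B :
  reflect (exists x, B = symdiff A [set x]) (#|symdiff A B| == 1).
Proof.
apply: (iffP cards1P) => [] [x Ex]; exists x.
  by rewrite -Ex symdiffK.
by rewrite Ex symdiffK.
Qed.

Lemma card_symdiff1 A B : #|symdiff A B| == 1 ->
  (A \subset B /\ #|B| = #|A|.+1) \/ (B \subset A /\ #|A| = #|B|.+1).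
Proof.
case/symdiff_card1P => x ->; rewrite symdiff_set1.
case: (boolP (x \in A)) => xA; [right|left].
  by rewrite subsetDl (cardsD1 x A) xA.
by rewrite subsetUr cardsU1 xA.
Qed.

Lemma setD1C A x y : A :\ x :\ y = A :\ y :\ x.
Proof. by rewrite !setDDl setUC. Qed.

Lemma setTD2 x y : setT :\ x :\ y = ~: [set x; y].
Proof. by rewrite setDDl setTD. Qed.

End Symdiff.

Definition square (T : eqType) (r : rel T) (x1 x2 x3 x4 : T) : bool :=
  [&& r x1 x2, r x2 x3, r x3 x4, r x4 x1, x1 != x3 & x2 != x4].

Lemma square_rot (T : eqType) (r : rel T) x1 x2 x3 x4 :
  square r x1 x2 x3 x4 -> square r x2 x3 x4 x1.
Proof.
by rewrite /square => /and5P [-> -> -> -> /andP [n13 n24]]; rewrite n24 eq_sym n13.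
Qed.

Lemma symdiff_square_set0 (T : finType) (X1 X2 X3 X4 : {set T}) :
  square (fun X Y => #|symdiff X Y| == 1) X1 X2 X3 X4 ->
  #|X1| <= 2 -> #|X2| <= 2 -> #|X3| <= 2 -> #|X4| <= 2 ->
  [|| X1 == set0, X2 == set0, X3 == set0 | X4 == set0].
Proof.
wlog c1 : X1 X2 X3 X4 / #|X1| <= 1 => [wlog sq c1 c2 c3 c4|].
  have [le1|gt1] := leqP #|X1| 1; first exact: wlog.
  have c2' : #|X2| <= 1.
    by case/and5P: sq => /card_symdiff1 [] [_]; lia.
  have := wlog X2 X3 X4 X1 c2' (square_rot sq) c2 c3 c4 c1.
  by case/or4P => ->; rewrite ?orbT.
move=> sq _ c2 c3 c4; apply/negPn/negP; rewrite -!cards_eq0 !negb_or.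
case/and5P: sq => d12 d23 d34 d41 /andP [n13 n24] /and4P [n1 n2 n3 n4].
have [[s12 e2] | [_ e1]] := card_symdiff1 d12; last by lia.
have [[_ e3] | [s32 e3]] := card_symdiff1 d23; first by lia.
have [[s34 e4] | [_ e3']] := card_symdiff1 d34; last by lia.
have [[_ e1'] | [s14 _]] := card_symdiff1 d41; first by lia.
have /cards1P [a Ea] : #|X1| == 1 by lia.
have /cards1P [b Eb] : #|X3| == 1 by lia.
have ab : a != b by apply: contraNneq n13 => ab; rewrite Ea Eb ab.
have E2 : X1 :|: X3 = X2.
  by apply/eqP; rewrite eqEcard subUset s12 s32 Ea Eb cards2 ab; lia.
have E4 : X1 :|: X3 = X4.
  by apply/eqP; rewrite eqEcard subUset s14 s34 Ea Eb cards2 ab; lia.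
by rewrite -E2 -E4 eqxx in n24.
Qed.

Section SkewForcing.
Variables (T : finType) (e : rel T).
Implicit Types (B C S : {set T}).

Lemma in_nbhd x y : (y \in nbhd e x) = e x y.
Proof. by rewrite inE. Qed.

Lemma skew_forcingT : skew_forcing e setT.
Proof. exact: connect0. Qed.

Lemma skew_forcing_setD1 u w S : e u w -> {in ~: S, forall x, ~~ e u x} ->
  skew_forcing e S -> skew_forcing e (S :\ w).
Proof.
move=> euw uS; apply: connect_trans; apply: connect1.
have wS : w \in S by apply: contraLR euw => wS; apply: uS; rewrite inE.
apply/existsP; exists u; apply/existsP; exists w; rewrite setD1K // eqxx andbT.
apply/eqP/setP => x; rewrite !inE.
case: (x =P w) => [->|/eqP xw]; first by rewrite euw.
by case: (boolP (x \in S)) => xS; rewrite ?andbF // (negbTE (uS x _)) ?inE.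
Qed.

Lemma skew_step_sub B B' C : B \subset B' -> skew_step e B C ->
  connect (skew_step e) B' (C :|: B').
Proof.
move=> sBB' /existsP [u /existsP [w /andP [/eqP Nuw /eqP ->]]].
rewrite -setUA (setUidPr sBB').
have [wB'|wB'] := boolP (w \in B').
  by rewrite (setUidPr (_ : [set w] \subset B')) ?sub1set //; apply: connect0.
apply: connect1; apply/existsP; exists u; apply/existsP; exists w.
rewrite eqxx andbT eqEsubset; apply/andP; split; first by rewrite -Nuw setIS ?setCS.
rewrite sub1set !inE wB' andbT.
by have := set11 w; rewrite -Nuw => /setIP [+ _]; rewrite in_nbhd.
Qed.

Lemma skew_forcingS S S' : S \subset S' -> skew_forcing e S -> skew_forcing e S'.
Proof.
move=> sSS' /connectP [p]; elim: p S S' sSS' => [|C p IH] S S' sSS' /=.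
  by move=> _ eS; move: sSS'; rewrite -eS subTset => /eqP ->; apply: skew_forcingT.
case/andP => stC pC lastC; apply: connect_trans (skew_step_sub sSS' stC) _.
exact: IH (subsetUl _ _) pC lastC.
Qed.

Lemma tar_adj_vertex S S' : tar_adj e S S' -> S \in tar_vertices e.
Proof. by rewrite inE => /andP []. Qed.

Lemma tar_deg_toggle S : skew_forcing e S ->
  tar_deg e S = #|[set x | skew_forcing e (symdiff S [set x])]|.
Proof.
move=> fS; have toggle_inj : injective (fun x => symdiff S [set x]).
  by move=> x y /(congr1 (symdiff S)); rewrite !symdiffK; apply: set1_inj.
rewrite /tar_deg -(card_imset _ toggle_inj).
congr #|pred_of_set _|; apply/setP => S'; rewrite inE /tar_adj fS /=; apply/andP/imsetP.
  by case=> fS' /symdiff_card1P [x ES']; exists x; rewrite // inE -ES'.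
by case=> x; rewrite inE => fx ->; split; last by apply/symdiff_card1P; exists x.
Qed.

Lemma tar_deg_le S : tar_deg e S <= #|T|.
Proof.
have [fS|nfS] := boolP (skew_forcing e S); first by rewrite tar_deg_toggle // max_card.
suff -> : tar_deg e S = 0 by [].
by apply: eq_card0 => S'; rewrite inE /tar_adj (negbTE nfS).
Qed.

Hypotheses (e_sym : symmetric e) (e_irr : irreflexive e).

Lemma adj_neq a b : e a b -> a != b.
Proof. by apply: contraTneq => ->; rewrite e_irr. Qed.

Lemma skew_forcing_edge a b : e a b -> skew_forcing e (setT :\ a :\ b).
Proof.
move=> eab; apply: (skew_forcing_setD1 (u := a)) => // [x|].
  by rewrite !inE andbT negbK => /eqP ->; rewrite e_irr.
apply: (skew_forcing_setD1 (u := b)); first by rewrite e_sym.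
  by move=> x; rewrite !inE.
exact: skew_forcingT.
Qed.

Lemma skew_forcing_setT3 x y z v : e x z -> ~~ e x y -> ~~ e y z -> e y v ->
  skew_forcing e (setT :\ y :\ z :\ x).
Proof.
move=> exz nxy nyz eyv; apply: (skew_forcing_setD1 (u := z)) => [|t|].
- by rewrite e_sym.
- by rewrite !inE andbT negb_and !negbK => /orP [] /eqP ->; rewrite ?e_irr // e_sym.
apply: (skew_forcing_setD1 (u := x)) => // [t|]; first by rewrite !inE andbT negbK => /eqP ->.
apply: (skew_forcing_setD1 (u := v)) => [|t|]; last exact: skew_forcingT.
  by rewrite e_sym.
by rewrite !inE.
Qed.

Lemma tar_square_setD1 S a b : a \in S -> b \in S -> a != b ->
  skew_forcing e (S :\ a :\ b) ->
  square (tar_adj e) S (S :\ a) (S :\ a :\ b) (S :\ b).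
Proof.
move=> aS bS ab fSab.
have sf S' : S :\ a :\ b \subset S' -> skew_forcing e S'.
  by move=> sub; apply: skew_forcingS sub fSab.
have bSa : b \in S :\ a by rewrite !inE eq_sym ab.
have aSb : a \in S :\ b by rewrite !inE ab.
rewrite /square /tar_adj !sf ?subsetDl ?(subset_trans (subsetDl _ _) (subsetDl _ _)) //;
  last by rewrite setD1C subsetDl.
rewrite symdiff_setD1 // symdiff_setD1 // setD1C symdiffC symdiff_setD1 //.
rewrite symdiffC symdiff_setD1 // !cards1 /=; apply/andP; split; apply/eqP.
  by move=> /setP /(_ a); rewrite !inE eqxx aS.
by move=> /setP /(_ b); rewrite bSa !inE eqxx.
Qed.

End SkewForcing.

Definition degree_count (U : finType) (A : {set U}) (r : rel U) (P : pred nat) :=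
  #|[set x in A | P #|[set y in A | r x y]|]|.

Lemma degree_count_predT (U : finType) (A : {set U}) (r : rel U) :
  degree_count A r (fun=> true) = #|A|.
Proof. by apply: eq_card => x; rewrite inE andbT. Qed.

Lemma degree_count_compl (U : finType) (r : rel U) (P : pred nat) :
  degree_count setT (fun x y => ~~ r x y) P =
  degree_count setT r (fun d => P (#|U| - d)).
Proof.
apply: eq_card => x; rewrite !inE; congr P.
have -> : [set y in setT | ~~ r x y] = ~: [set y in setT | r x y].
  by apply/setP => y; rewrite !inE.
by rewrite cardsCs setCK.
Qed.

Lemma degree_count_tar_gt (T : finType) (e : rel T) :
  degree_count (tar_vertices e) (tar_adj e) (fun d => #|T| < d) = 0.
Proof.
apply: eq_card0 => S; rewrite !inE ltnNge andbC (leq_trans _ (tar_deg_le e S)) //.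
by apply: subset_leq_card; apply/subsetP => S'; rewrite !inE => /andP [].
Qed.

Definition small_clique (T : finType) (e : rel T) (X : {set T}) : bool :=
  (#|X| <= 2) && [forall a in X, forall b in X, (a != b) ==> e a b].

Section CompleteMultipartite.
Variables (T : finType) (e : rel T).
Hypotheses (e_sym : symmetric e) (e_irr : irreflexive e)
  (e_nb : forall x, exists y, e x y).
Implicit Types (B C S X Y : {set T}).

Lemma small_cliqueP X :
  reflect (#|X| <= 2 /\ {in X &, forall a b, a != b -> e a b}) (small_clique e X).
Proof.
apply: (iffP andP) => [] [cX cl]; split => //.
  by move=> a b aX bX; move/forall_inP/(_ a aX)/forall_inP/(_ b bX)/implyP: cl.
by apply/forall_inP => a aX; apply/forall_inP => b bX; apply/implyP; apply: cl.
Qed.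

Lemma small_clique_le2 X : small_clique e X -> #|X| <= 2.
Proof. by case/andP. Qed.

Lemma small_cliqueS X Y : Y \subset X -> small_clique e X -> small_clique e Y.
Proof.
move=> sYX /small_cliqueP [cX cl]; apply/small_cliqueP; split.
  exact: leq_trans (subset_leq_card sYX) cX.
by move=> a b aY bY; apply: cl; apply: (subsetP sYX).
Qed.

Lemma small_clique0 : small_clique e set0.
Proof. by apply/small_cliqueP; rewrite cards0; split => // a; rewrite inE. Qed.

Lemma small_clique1 y : small_clique e [set y].
Proof.
apply/small_cliqueP; rewrite cards1; split => // a b.
by rewrite !inE => /eqP -> /eqP ->; rewrite eqxx.
Qed.

Lemma small_clique2 a b : a != b -> small_clique e [set a; b] = e a b.
Proof.
move=> ab; apply/small_cliqueP/idP => [[_ cl]|eab].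
  exact: cl (set21 a b) (set22 a b) ab.
split; first by rewrite cards2 ab.
by move=> x y; rewrite !inE => /orP [] /eqP -> /orP [] /eqP ->; rewrite ?eqxx // e_sym.
Qed.

Lemma small_clique_sub_edge X x0 : small_clique e X -> x0 \in X ->
  exists2 b, e x0 b & X \subset [set x0; b].
Proof.
move=> cX x0X; have [b /andP [bX bx0]|X1] := pickP [pred b in X | b != x0].
  have ex0b : e x0 b by case/small_cliqueP: cX => _; apply; rewrite // eq_sym.
  exists b => //; suff -> : X = [set x0; b] by [].
  apply/esym/eqP; rewrite eqEcard cards2 eq_sym bx0.
  by rewrite subUset !sub1set x0X bX small_clique_le2.
have [b ex0b] := e_nb x0; exists b => //; apply/subsetP => x xX.
by move: (X1 x); rewrite /= xX => /negbFE /eqP ->; rewrite set21.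
Qed.

Lemma small_clique_skew_forcing X : small_clique e X -> skew_forcing e (~: X).
Proof.
move=> cX; have [->|[a aX]] := set_0Vmem X; first by rewrite setC0; apply: skew_forcingT.
have [b eab sXab] := small_clique_sub_edge cX aX.
apply: skew_forcingS (skew_forcing_edge e_sym e_irr eab).
by rewrite setTD2 setCS.
Qed.

(* With [e] symmetric and irreflexive, this says that [e] is complete
   multipartite, its parts being the classes of non-adjacency. *)
Hypothesis e_cotrans : transitive (fun x y => ~~ e x y).

Lemma small_clique_skew_step B C : skew_step e B C ->
  small_clique e (~: C) -> small_clique e (~: B).
Proof.
case/existsP => u /existsP [w /andP [/eqP Nuw /eqP ->]].
have /setIP [] : w \in nbhd e u :&: ~: B by rewrite Nuw set11.
rewrite in_nbhd => euw wW.
have nonadj x : x \in ~: B :\ w -> ~~ e u x.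
  rewrite !inE => /andP [xw xB]; apply: contraNN xw => eux.
  by rewrite -in_set1 -Nuw !inE eux.
have adj_w x : x \in ~: B :\ w -> e x w.
  move=> xW; apply/negPn/negP => nexw.
  by have := e_cotrans (nonadj x xW) nexw; rewrite euw.
rewrite setCU setIC -setDE => /small_cliqueP [_ cl]; apply/small_cliqueP; split.
  rewrite (cardsD1 w) wW add1n ltnS; apply/card_le1_eqP => x y xW yW.
  apply/eqP; apply: contraT; rewrite eq_sym => xy; have := cl x y xW yW xy.
  suff nxy : ~~ e x y by rewrite (negbTE nxy).
  by apply: (@e_cotrans u x y); [rewrite e_sym|]; apply: nonadj.
move=> a b aW bW ab; have [aw|aw] := eqVneq a w.
  by rewrite aw e_sym adj_w // in_setD1 -aw eq_sym ab bW.
have [bw|bw] := eqVneq b w; first by rewrite bw adj_w // in_setD1 aw aW.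
by apply: cl; rewrite // in_setD1 ?aw ?bw.
Qed.

Lemma skew_forcing_small_clique S : skew_forcing e S -> small_clique e (~: S).
Proof.
case/connectP => p; elim: p S => [|C p IH] S /=.
  by move=> _ <-; rewrite setCT small_clique0.
by case/andP => stC pC lastC; apply: small_clique_skew_step stC (IH C pC lastC).
Qed.

Lemma skew_forcing_compl X : skew_forcing e (~: X) = small_clique e X.
Proof.
apply/idP/idP; last exact: small_clique_skew_forcing.
by move/skew_forcing_small_clique; rewrite setCK.
Qed.

Lemma tar_deg_compl X : small_clique e X ->
  tar_deg e (~: X) = #|X| + #|[set x | (x \notin X) && small_clique e (x |: X)]|.
Proof.
move=> cX; rewrite tar_deg_toggle ?skew_forcing_compl // -(cardsID X); congr (_ + _).
  apply/eq_card => x; rewrite !inE symdiff_setCl skew_forcing_compl symdiff_set1.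
  by case: (boolP (x \in X)) => xX; rewrite ?andbF // (small_cliqueS (subsetDl _ _) cX).
apply/eq_card => x; rewrite !inE symdiff_setCl skew_forcing_compl symdiff_set1.
by case: (x \in X).
Qed.

Lemma tar_deg_compl0 : tar_deg e (~: set0) = #|T|.
Proof.
rewrite tar_deg_compl ?small_clique0 // cards0 -cardsT.
by apply/eq_card => x; rewrite !inE setU0 small_clique1.
Qed.

Lemma tar_deg_compl1 y : tar_deg e (~: [set y]) = #|nbhd e y|.+1.
Proof.
rewrite tar_deg_compl ?small_clique1 // cards1 add1n; congr _.+1.
apply/eq_card => x; rewrite !inE.
by have [->|xy] := eqVneq x y; rewrite ?e_irr //= small_clique2 // e_sym.
Qed.

Lemma tar_deg_compl2 X : small_clique e X -> #|X| = 2 -> tar_deg e (~: X) = 2.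
Proof.
move=> cX X2; rewrite tar_deg_compl // X2.
rewrite (eq_card0 (A := [set x | _])) // => x; rewrite inE; apply/negP.
by case/andP => xX /small_clique_le2; rewrite cardsU1 xX X2.
Qed.

Lemma skew_forcing_setT1 y : skew_forcing e (setT :\ y).
Proof. by rewrite setTD small_clique_skew_forcing ?small_clique1. Qed.

Lemma tar_deg_setT1 y : tar_deg e (setT :\ y) = #|nbhd e y|.+1.
Proof. by rewrite setTD tar_deg_compl1. Qed.

Lemma minset_skew_forcingP (x0 : T) S :
  minset (skew_forcing e) S <-> exists a b, e a b /\ S = setT :\ a :\ b.
Proof.
split => [/minsetP [fS minS] | [a [b [eab ->]]]].
  have [a [b [eab sSab]]] : exists a b, e a b /\ ~: S \subset [set a; b].
    have [S0|[a aS]] := set_0Vmem (~: S).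
      by have [b eb] := e_nb x0; exists x0, b; rewrite S0 sub0set.
    have cS : small_clique e (~: S) by rewrite -skew_forcing_compl setCK.
    by have [b eab sab] := small_clique_sub_edge cS aS; exists a, b.
  exists a, b; split => //; symmetry; apply: minS; first exact: skew_forcing_edge.
  by rewrite setTD2 -setCS setCK.
have ab := adj_neq e_irr eab.
apply/minsetP; split => [|B fB]; first exact: skew_forcing_edge.
rewrite setTD2 -setCS setCK => sB; apply/setC_inj/esym/eqP.
rewrite setCK eqEcard sB cards2 ab.
exact/small_clique_le2/skew_forcing_small_clique.
Qed.

Lemma minset_skew_forcingE (x0 : T) S :
  minset (skew_forcing e) S <-> skew_forcing e S /\ #|S| = #|T| - 2.
Proof.
have card_edge a b : e a b -> #|setT :\ a :\ b| = #|T| - 2.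
  by move=> eab; rewrite setTD2 cardsCs setCK cards2 (adj_neq e_irr eab).
rewrite minset_skew_forcingP //; split => [[a [b [eab ->]]]|[fS cS]].
  by split; [exact: skew_forcing_edge | exact: card_edge].
have [y x0y] := e_nb x0; have T2 : 2 <= #|T|.
  by have := max_card [set x0; y]; rewrite cards2 (adj_neq e_irr x0y).
have cX : small_clique e (~: S) by rewrite -skew_forcing_compl setCK.
have /cards2P [a [b [ab EX]]] : #|~: S| == 2.
  by rewrite cardsCs setCK cS; apply/eqP; lia.
exists a, b; split; first by rewrite -(small_clique2 ab) -EX.
by rewrite setTD2 -EX setCK.
Qed.

Lemma minset_tar_deg (x0 : T) S : minset (skew_forcing e) S -> tar_deg e S = 2.
Proof.
case/(minset_skew_forcingP x0) => a [b [eab ->]].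
by rewrite setTD2 tar_deg_compl2 ?small_clique2 ?cards2 ?(adj_neq e_irr eab).
Qed.

Lemma tar_square_setT S1 S2 S3 S4 : square (tar_adj e) S1 S2 S3 S4 ->
  [|| S1 == setT, S2 == setT, S3 == setT | S4 == setT].
Proof.
case/and5P => /and3P [f1 f2 d12] /and3P [_ f3 d23] /and3P [_ f4 d34] /and3P [_ _ d41].
case/andP => n13 n24.
have le2 S : skew_forcing e S -> #|~: S| <= 2.
  by move=> fS; apply/small_clique_le2/skew_forcing_small_clique.
have sq : square (fun X Y => #|symdiff X Y| == 1) (~: S1) (~: S2) (~: S3) (~: S4).
  by rewrite /square !symdiff_setC d12 d23 d34 d41 !(inj_eq (@setC_inj T)) n13 n24.
move: (symdiff_square_set0 sq (le2 _ f1) (le2 _ f2) (le2 _ f3) (le2 _ f4)).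
by rewrite -setCT !(inj_eq (@setC_inj T)).
Qed.

Lemma degree_count_tar_compl (P : pred nat) :
  degree_count (tar_vertices e) (tar_adj e) P =
  #|[set X | small_clique e X && P (tar_deg e (~: X))]|.
Proof.
have deg S : #|[set S' in tar_vertices e | tar_adj e S S']| = tar_deg e S.
  apply: eq_card => S'; rewrite !inE; apply/andP/idP => [[] //|adj].
  by split=> //; case/and3P: adj.
rewrite /degree_count -(card_imset _ (@setC_inj T)); congr #|pred_of_set _|.
apply/setP => S; rewrite inE deg inE; apply/andP/imsetP => [[fS PS]|[X]].
  by exists (~: S); rewrite ?setCK // inE -skew_forcing_compl // setCK fS.
by rewrite inE -skew_forcing_compl // => /andP [fX PX] ->.
Qed.

Lemma degree_count_tar (P : pred nat) :
  degree_count (tar_vertices e) (tar_adj e) P =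
  P #|T| + degree_count setT e (fun d => P d.+1) +
  P 2 * #|[set X | small_clique e X && (#|X| == 2)]|.
Proof.
rewrite degree_count_tar_compl; set A := [set X | _].
have nb y : #|nbhd e y| = #|[set z in setT | e y z]|.
  by apply: eq_card => z; rewrite !inE.
have A0 : #|A :&: [set X : {set T} | #|X| == 0]| = P #|T|.
  have -> : A :&: [set X : {set T} | #|X| == 0] = if P #|T| then [set set0] else set0.
    apply/setP => X; rewrite /A !inE cards_eq0; have [->|X0] := eqVneq X set0.
      by rewrite small_clique0 tar_deg_compl0 andbT; case: (P _); rewrite ?inE ?eqxx.
    by rewrite andbF; case: (P _); rewrite ?inE ?(negbTE X0).
  by case: (P _); rewrite ?cards1 ?cards0.
have A1 : #|(A :\: [set X : {set T} | #|X| == 0]) :&: [set X : {set T} | #|X| == 1]| =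
    degree_count setT e (fun d => P d.+1).
  rewrite /degree_count -(card_imset _ (@set1_inj T)); congr #|pred_of_set _|.
  apply/setP => X; rewrite /A !inE; apply/idP/imsetP.
    case/andP => /and3P [_ _ PX] /cards1P [y EX]; exists y => //.
    by rewrite inE -nb in_setT -tar_deg_compl1 -EX.
  case=> y; rewrite inE in_setT -nb -tar_deg_compl1 => Py ->.
  by rewrite cards1 small_clique1 Py.
have A2 : #|A :\: [set X : {set T} | #|X| == 0] :\: [set X : {set T} | #|X| == 1]| =
    P 2 * #|[set X | small_clique e X && (#|X| == 2)]|.
  have -> : A :\: [set X : {set T} | #|X| == 0] :\: [set X : {set T} | #|X| == 1] =
      if P 2 then [set X | small_clique e X && (#|X| == 2)] else set0.
    apply/setP => X; rewrite /A; case P2: (P 2); rewrite !inE;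
      have [cX|] := boolP (small_clique e X); rewrite ?andbF //=;
      move: (tar_deg_compl2 cX) (small_clique_le2 cX);
      by case: #|X| => [|[|[|k]]] // /(_ erefl) -> _; rewrite /= P2.
  by case: (P 2); rewrite ?mul1n ?mul0n ?cards0.
rewrite -(cardsID [set X : {set T} | #|X| == 0] A) A0.
by rewrite -(cardsID [set X : {set T} | #|X| == 1]) A1 A2 addnA.
Qed.

Lemma card_le_tar_degree_count (T' : finType) (e' : rel T') :
  (forall P, degree_count (tar_vertices e) (tar_adj e) P =
             degree_count (tar_vertices e') (tar_adj e') P) -> #|T| <= #|T'|.
Proof.
move/(_ (fun d => #|T'| < d)); rewrite degree_count_tar degree_count_tar_gt.
move/eqP; rewrite !addn_eq0 => /andP [/andP [lt0 _] _].
by rewrite leqNgt; apply: contraTN lt0 => ->.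
Qed.

End CompleteMultipartite.

Section IsoOn.
Variables (U W : finType) (r : rel U) (s : rel W).
Implicit Types (A : {set U}) (B : {set W}).

Lemma imset_sep (f : U -> W) A (p : pred W) :
  f @: [set x in A | p (f x)] = [set y in f @: A | p y].
Proof.
apply/setP => y; rewrite inE; apply/imsetP/andP => [[x] | [/imsetP [x xA ->] py]].
  by rewrite inE => /andP [xA px] ->; split; first exact: imset_f.
by exists x; rewrite // inE xA.
Qed.

Lemma iso_on_degree_count A B P : iso_on A r B s ->
  degree_count A r P = degree_count B s P.
Proof.
case=> f [f_inj fA f_rel].
have deg x : x \in A -> #|[set y in B | s (f x) y]| = #|[set y in A | r x y]|.
  move=> xA; rewrite -fA -imset_sep card_in_imset; last first.
    by apply: sub_in2 f_inj => y; rewrite inE => /andP [].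
  by apply: eq_card => y; rewrite !inE; case: (boolP (y \in A)) => //= yA; rewrite f_rel.
rewrite /degree_count -fA -imset_sep card_in_imset; last first.
  by apply: sub_in2 f_inj => y; rewrite inE => /andP [].
by apply: eq_card => x; rewrite !inE; case: (boolP (x \in A)) => //= xA; rewrite fA deg.
Qed.

Lemma iso_on_square A (f : U -> W) x1 x2 x3 x4 : {in A &, injective f} ->
  {in A &, forall x y, r x y = s (f x) (f y)} ->
  x1 \in A -> x2 \in A -> x3 \in A -> x4 \in A ->
  square r x1 x2 x3 x4 -> square s (f x1) (f x2) (f x3) (f x4).
Proof.
by move=> f_inj f_rel A1 A2 A3 A4; rewrite /square !f_rel ?(inj_in_eq f_inj).
Qed.

End IsoOn.

Section Classes.
Variables (U : finType) (r : rel U).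
Hypotheses (r_sym : symmetric r) (r_trans : transitive r).
Implicit Types (A C : {set U}).

Lemma class_eq A x0 x : x \in [set y in A | r x0 y] ->
  [set y in A | r x y] = [set y in A | r x0 y].
Proof.
rewrite inE => /andP [_ rx0x]; apply/setP => y; rewrite !inE.
have [yA|] //= := boolP (y \in A); apply/idP/idP => [|rx0y].
  exact: (@r_trans x).
by apply: (@r_trans x0); rewrite // r_sym.
Qed.

Lemma degree_count_setD_class A C P :
  C \subset A -> {in C, forall x, [set y in A | r x y] = C} ->
  degree_count (A :\: C) r P = degree_count A r P - P #|C| * #|C|.
Proof.
move=> sCA classC.
have out x : x \in A :\: C -> [set y in A :\: C | r x y] = [set y in A | r x y].
  case/setDP => xA xC; apply/setP => y; rewrite !inE.
  have [yC|] := boolP (y \in C); rewrite ?andbT //= andbC.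
  apply/esym/negbTE; apply: contraNN xC => /andP [rxy _].
  by rewrite -(classC y yC) inE xA r_sym.
rewrite /degree_count.
have -> : [set x in A :\: C | P #|[set y in A :\: C | r x y]|] =
    [set x in A | P #|[set y in A | r x y]|] :\: C.
  apply/setP => x; rewrite !inE; have [xC|xC] /= := boolP (x \in C) => //.
  by have [xA|] //= := boolP (x \in A); rewrite out // inE xC.
rewrite cardsD; congr (_ - _).
have -> : [set x in A | P #|[set y in A | r x y]|] :&: C = if P #|C| then C else set0.
  apply/setP => x; rewrite !inE; have [xC|xC] := boolP (x \in C); last first.
    by rewrite andbF; case: (P _); rewrite ?inE ?(negbTE xC).
  by rewrite andbT (subsetP sCA) //= classC //; case: (P _); rewrite ?inE ?xC.
by case: (P _); rewrite ?mul1n ?cards0.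
Qed.

End Classes.

Section EquivalenceIso.
Variables (U W : finType) (r : rel U) (s : rel W).
Hypotheses (r_refl : reflexive r) (r_sym : symmetric r) (r_trans : transitive r).
Hypotheses (s_sym : symmetric s) (s_trans : transitive s).
Implicit Types (A C : {set U}) (B D : {set W}).

Lemma iso_on_setU A1 A2 B1 B2 :
  [disjoint A1 & A2] -> [disjoint B1 & B2] ->
  {in A1 & A2, forall x y, ~~ r x y} -> {in B1 & B2, forall x y, ~~ s x y} ->
  iso_on A1 r B1 s -> iso_on A2 r B2 s -> iso_on (A1 :|: A2) r (B1 :|: B2) s.
Proof.
move=> dA dB nrA nsB [f1 [inj1 im1 rel1]] [f2 [inj2 im2 rel2]].
pose f x := if x \in A1 then f1 x else f2 x.
have f1E x : x \in A1 -> f x = f1 x by rewrite /f => ->.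
have f2E x : x \in A2 -> f x = f2 x by rewrite /f => /(disjointFl dA) ->.
have f1B x : x \in A1 -> f1 x \in B1 by move=> xA; rewrite -im1 imset_f.
have f2B x : x \in A2 -> f2 x \in B2 by move=> xA; rewrite -im2 imset_f.
exists f; split.
- move=> x y /setUP [xA|xA] /setUP [yA|yA].
  + by rewrite !f1E //; apply: inj1.
  + rewrite f1E ?f2E // => fxy.
    by have := disjointFl dB (f2B y yA); rewrite -fxy f1B.
  + rewrite f2E ?f1E // => fxy.
    by have := disjointFl dB (f2B x xA); rewrite fxy f1B.
  + by rewrite !f2E //; apply: inj2.
- rewrite imsetU -im1 -im2; congr (_ :|: _); apply: eq_in_imset => x xA.
    exact: f1E.
  exact: f2E.
- move=> x y /setUP [xA|xA] /setUP [yA|yA].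
  + by rewrite !f1E //; apply: rel1.
  + rewrite f1E ?f2E //.
    by rewrite (negbTE (nrA x y xA yA)) (negbTE (nsB _ _ (f1B x xA) (f2B y yA))).
  + rewrite f2E ?f1E // r_sym s_sym.
    by rewrite (negbTE (nrA y x yA xA)) (negbTE (nsB _ _ (f1B y yA) (f2B x xA))).
  + by rewrite !f2E //; apply: rel2.
Qed.

Lemma iso_on_total C D x0 : x0 \in C -> #|C| = #|D| ->
  {in C &, forall x y, r x y} -> {in D &, forall x y, s x y} -> iso_on C r D s.
Proof.
move=> x0C cCD rC sD.
pose h x := enum_val (cast_ord cCD (enum_rank_in x0C x)).
have h_inj : {in C &, injective h}.
  move=> x y xC yC /enum_val_inj /cast_ord_inj /(congr1 enum_val).
  by rewrite !enum_rankK_in.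
exists h; split => //.
  apply/eqP; rewrite eqEcard card_in_imset // cCD leqnn andbT.
  by apply/subsetP => _ /imsetP [x _ ->]; apply: enum_valP.
by move=> x y xC yC; rewrite rC // sD //; apply: enum_valP.
Qed.

(* [w0] only provides the (vacuous) map when the domain is empty. *)
Lemma iso_on_set0 (w0 : W) B :
  (forall k, degree_count set0 r (pred1 k) = degree_count B s (pred1 k)) ->
  iso_on set0 r B s.
Proof.
move=> cnt; suff -> : B = set0.
  by exists (fun=> w0); rewrite imset0; split=> // x; rewrite inE.
apply/eqP; rewrite -subset0; apply/subsetP => y yB.
have := cnt #|[set z in B | s y z]|.
rewrite /degree_count (eq_card0 (A := [set x in set0 | _])) => [|x]; last by rewrite !inE.
by move/esym/eqP; rewrite cards_eq0 => /eqP /setP /(_ y); rewrite !inE yB eqxx.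
Qed.

Lemma equiv_iso_on (w0 : W) A B :
  (forall k, degree_count A r (pred1 k) = degree_count B s (pred1 k)) ->
  iso_on A r B s.
Proof.
have [m] := ubnP #|A|; elim: m A B => // m IH A B ltAm cnt.
have [A0|[x0 x0A]] := set_0Vmem A.
  by rewrite A0 in cnt *; apply: iso_on_set0 cnt.
set C := [set y in A | r x0 y].
have classC x : x \in C -> [set y in A | r x y] = C by apply: class_eq.
have x0C : x0 \in C by rewrite inE x0A r_refl.
have sCA : C \subset A by apply/subsetP => x; rewrite inE => /andP [].
have [y0 y0B cD] : exists2 y0, y0 \in B & #|[set y in B | s y0 y]| = #|C|.
  have : 0 < degree_count B s (pred1 #|C|).
    by rewrite -cnt; apply/card_gt0P; exists x0; rewrite !inE x0A; apply/eqP.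
  by case/card_gt0P => y0; rewrite !inE => /andP [y0B /eqP cD]; exists y0.
set D := [set y in B | s y0 y] in cD.
have classD y : y \in D -> [set z in B | s y z] = D by apply: class_eq.
have sDB : D \subset B by apply/subsetP => y; rewrite inE => /andP [].
rewrite -(setID A C) -(setID B D) (setIidPr sCA) (setIidPr sDB).
apply: iso_on_setU.
- by rewrite disjoints_subset setDE setCI setCK subsetUr.
- by rewrite disjoints_subset setDE setCI setCK subsetUr.
- move=> x y xC /setDP [yA yC]; apply: contraNN yC => rxy.
  by rewrite -(classC x xC) inE yA.
- move=> x y xD /setDP [yB yD]; apply: contraNN yD => sxy.
  by rewrite -(classD x xD) inE yB.
- apply: iso_on_total x0C (esym cD) _ _ => [x y xC yC|x y xD yD].
    by rewrite -(classC x xC) in yC; case/setIdP: yC.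
  by rewrite -(classD x xD) in yD; case/setIdP: yD.
apply: IH => [|k]; last by rewrite !degree_count_setD_class ?cnt ?cD.
rewrite -ltnS; apply: leq_trans ltAm; rewrite (cardsD1 x0 A) x0A add1n !ltnS.
apply: subset_leq_card.
by apply/subsetP => x /setDP [xA xC]; rewrite !inE xA andbT; apply: contraNneq xC => ->.
Qed.

End EquivalenceIso.

Section TarIso.
Variables (U W : finType) (e' : rel U) (e : rel W).
Hypotheses (e'_sym : symmetric e') (e'_irr : irreflexive e')
  (e'_nb : forall x, exists y, e' x y).
Hypotheses (e_sym : symmetric e) (e_irr : irreflexive e)
  (e_nb : forall x, exists y, e x y) (e_cotrans : transitive (fun x y => ~~ e x y)).
Hypothesis iso : tar_iso e' e.

Lemma tar_iso_cotransitive : transitive (fun x y => ~~ e' x y).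
Proof.
move=> y x z nxy nyz; apply/negP => exz; have [f [f_inj _ f_adj]] := iso.
have xy : x != y by apply: contraNneq nyz => <-.
have zx : z != x by apply: contraTneq exz => ->; rewrite e'_irr.
have zy : z != y by apply: contraNneq nxy => <-.
have [v eyv] := e'_nb y.
have f_yzx := skew_forcing_setT3 e'_sym e'_irr exz nxy nyz eyv.
have hit (S : {set U}) : x \in S -> y \in S -> setT :\ y :\ z :\ x \subset S :\ x :\ y ->
    exists X, [/\ X \in tar_vertices e', f X = setT & (z \in X) = (z \in S)].
  move=> xS yS sub; have sq := tar_square_setD1 xS yS xy (skew_forcingS sub f_yzx).
  have := sq; rewrite /square => /and5P [/tar_adj_vertex V1 /tar_adj_vertex V2].
  move=> /tar_adj_vertex V3 /tar_adj_vertex V4 _.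
  have := tar_square_setT e_sym e_cotrans (iso_on_square f_inj f_adj V1 V2 V3 V4 sq).
  case/or4P => /eqP fX;
    [exists S | exists (S :\ x) | exists (S :\ x :\ y) | exists (S :\ y)];
    by split => //; rewrite !inE ?zx ?zy.
have sub_yzx (S : {set U}) : setT :\ z \subset S ->
    setT :\ y :\ z :\ x \subset S :\ x :\ y.
  move=> sS; apply/subsetP => t; rewrite !inE => /and4P [tx tz ty _].
  by rewrite tx ty (subsetP sS) // !inE tz.
have xSz : x \in setT :\ z by rewrite !inE eq_sym zx.
have ySz : y \in setT :\ z by rewrite !inE eq_sym zy.
have [X1 [V1 fX1 zX1]] := hit setT (in_setT x) (in_setT y) (sub_yzx _ (subsetT _)).
have [X2 [V2 fX2 zX2]] := hit (setT :\ z) xSz ySz (sub_yzx _ (subxx _)).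
move: zX2; rewrite -(f_inj _ _ V1 V2 (etrans fX1 (esym fX2))) zX1.
by rewrite !inE eqxx.
Qed.

Lemma tar_iso_graph_iso (w0 : W) : graph_iso e' e.
Proof.
have e'_cotrans := tar_iso_cotransitive.
have cnt P : degree_count (tar_vertices e') (tar_adj e') P =
             degree_count (tar_vertices e) (tar_adj e) P.
  exact: iso_on_degree_count iso.
have eN : #|U| = #|W|.
  apply/eqP; rewrite eqn_leq.
  rewrite (card_le_tar_degree_count e'_sym e'_irr e'_nb e'_cotrans cnt).
  by rewrite (card_le_tar_degree_count e_sym e_irr e_nb e_cotrans (fun P => esym (cnt P))).
have eE : #|[set X | small_clique e' X && (#|X| == 2)]| =
          #|[set X | small_clique e X && (#|X| == 2)]|.
  move: (cnt (fun=> true)).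
  rewrite (degree_count_tar e'_sym) // (degree_count_tar e_sym) //.
  by rewrite !degree_count_predT !cardsT eN !mul1n => /addnI.
have eD P : degree_count setT e' P = degree_count setT e P.
  (* [fun d => P d.-1] becomes [P] again in the degree term of [degree_count_tar]. *)
  move: (cnt (fun d => P d.-1)).
  rewrite (degree_count_tar e'_sym) // (degree_count_tar e_sym) //.
  by rewrite eN eE => /addIn /addnI.
have eC k : degree_count setT (fun x y => ~~ e' x y) (pred1 k) =
            degree_count setT (fun x y => ~~ e x y) (pred1 k).
  by rewrite !degree_count_compl eN eD.
have [|||||g [g_inj g_im g_rel]] := equiv_iso_on _ _ _ _ _ w0 eC.
- by move=> x /=; rewrite e'_irr.
- by move=> x y /=; rewrite e'_sym.
- exact: e'_cotrans.
- by move=> x y /=; rewrite e_sym.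
- exact: e_cotrans.
by exists g; split=> // x y xT yT; apply: negb_inj; apply: g_rel.
Qed.

End TarIso.

Section CompleteMultipartiteGraph.
Variables (t : nat) (n : 'I_t -> nat).
Hypotheses (t_ge2 : 2 <= t) (n_gt0 : forall i, 0 < n i).

Lemma kmp_sym : symmetric (kmp_adj n).
Proof. by move=> x y; rewrite /kmp_adj eq_sym. Qed.

Lemma kmp_irr : irreflexive (kmp_adj n).
Proof. by move=> x; rewrite /kmp_adj eqxx. Qed.

Lemma kmp_cotrans : transitive (fun x y => ~~ kmp_adj n x y).
Proof. by move=> y x z; rewrite /kmp_adj !negbK => /eqP -> /eqP ->. Qed.

Definition kmp_vertex0 (i : 'I_t) : kmp_vertex n :=
  Tagged (fun i => 'I_(n i)) (Ordinal (n_gt0 i)).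

Lemma kmp_nb x : exists y, kmp_adj n x y.
Proof.
pose i0 : 'I_t := Ordinal (ltnW t_ge2); pose i1 : 'I_t := Ordinal t_ge2.
have [xi0|xi0] := eqVneq (tag x) i0; last by exists (kmp_vertex0 i0).
by exists (kmp_vertex0 i1); rewrite /kmp_adj xi0.
Qed.

Lemma card_kmp : #|kmp_vertex n| = \sum_(i < t) n i.
Proof.
rewrite card_tagged sumnE big_map big_enum /=.
by apply: eq_bigr => i _; rewrite card_ord.
Qed.

Lemma card_kmp_part i : #|[set y : kmp_vertex n | tag y == i]| = n i.
Proof.
have tag_inj :
    injective (fun j : 'I_(n i) => Tagged (fun i => 'I_(n i)) j : kmp_vertex n).
  move=> a b /(congr1 (tagged_as (Tagged (fun i => 'I_(n i)) a))).
  by rewrite !tagged_asE.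
suff -> : [set y : kmp_vertex n | tag y == i] =
    (fun j : 'I_(n i) => Tagged (fun i => 'I_(n i)) j : kmp_vertex n) @: setT.
  by rewrite card_imset ?cardsT ?card_ord.
apply/setP => y; rewrite inE; apply/idP/imsetP => [|[j _ ->]] //.
by case: y => i' j /= /eqP ii'; subst i'; exists j.
Qed.

Lemma card_kmp_nbhd y : #|nbhd (kmp_adj n) y| = #|kmp_vertex n| - n (tag y).
Proof.
rewrite -(card_kmp_part (tag y)) cardsCs; congr (_ - #|pred_of_set _|).
by apply/setP => z; rewrite !inE /kmp_adj negbK eq_sym.
Qed.

End CompleteMultipartiteGraph.

Theorem theorem5p2 (t : nat) (n : 'I_t -> nat)
    (ht : 2 <= t) (hn : forall i, 0 < n i) :
  let N := \sum_(i < t) n i in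
  (forall S : {set kmp_vertex n},
     minset (skew_forcing (kmp_adj n)) S <->
     exists u v : kmp_vertex n, tag u != tag v /\ S = setT :\ u :\ v) /\
  (forall S : {set kmp_vertex n},
     (skew_forcing (kmp_adj n) S /\ #|S| = N - 2) <->
     minset (skew_forcing (kmp_adj n)) S) /\
  (forall S : {set kmp_vertex n},
     minset (skew_forcing (kmp_adj n)) S -> tar_deg (kmp_adj n) S = 2) /\
  (forall (i : 'I_t) (y : kmp_vertex n), tag y = i ->
     skew_forcing (kmp_adj n) (setT :\ y) /\
     tar_deg (kmp_adj n) (setT :\ y) = N - n i + 1) /\
  (forall (T' : finType) (e' : rel T'),
     symmetric e' -> irreflexive e' -> (forall x, exists y, e' x y) ->
     tar_iso e' (kmp_adj n) -> graph_iso e' (kmp_adj n)).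
Proof.
move=> N; have cardN : #|kmp_vertex n| = N by apply: card_kmp.
have K_sym : symmetric (kmp_adj n) by apply: kmp_sym.
have K_irr : irreflexive (kmp_adj n) by apply: kmp_irr.
have K_nb := kmp_nb ht hn.
have K_cotr : transitive (fun x y => ~~ kmp_adj n x y) by apply: kmp_cotrans.
have x0 : kmp_vertex n := kmp_vertex0 hn (Ordinal (ltnW ht)).
split; first exact: minset_skew_forcingP K_sym K_irr K_nb K_cotr x0.
split.
  move=> S; rewrite -cardN; apply: iff_sym.
  exact: minset_skew_forcingE K_sym K_irr K_nb K_cotr x0 S.
split; first exact: minset_tar_deg K_sym K_irr K_nb K_cotr x0.
split.
  move=> i y <-; split; first exact: skew_forcing_setT1 K_sym K_irr K_nb y.
  by rewrite (tar_deg_setT1 K_sym K_irr K_nb K_cotr) card_kmp_nbhd cardN addn1.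
by move=> T' e' e'_sym e'_irr e'_nb iso; apply: tar_iso_graph_iso iso x0.
Qed.
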